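(* Fix $s\in\mathbb C^n$, let $\hat y\in\hat{\mathbb Y}(s)$ and $\beta=\beta(\hat y)$. Consider the equation $B\theta=\beta+2\pi k$ in unknowns $\theta\in\mathbb R^n$ and integer vector $k\in\mathbb Z^m$. Then: (1) For $\theta\in(-\pi,\pi]^n$, $h_\theta(\hat y)\in\mathbb X(s)$ if and only if there exists $k\in\mathbb Z^m$ such that $(\theta,k)$ solves $B\theta=\beta+2\pi k$. (2) If the equation $B\theta=\beta+2\pi k$ has a solution, then there is a solution $(\theta,k)$ with $\theta\in(-\pi,\pi]^n$, and the set of all solutions $(\theta',k')\in\mathbb R^n\times\mathbb Z^m$ equals $\sigma(\theta,k):=\{(\theta+2\pi\alpha,\,k+B\alpha):\alpha\in\mathbb Z^n\}$; in particular there is at most one such equivalence class of solutions.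
   Context: $G=(N,E)$ is a directed graph with nodes $N=\{0,1,\dots,n\}$ and $m=|E|$ links, whose underlying undirected graph is connected; $(i,j)\in E$ denotes a link from $i$ to $j$. Each link has impedance $z_{ij}=r_{ij}+\mathbf{i}x_{ij}$, each node $i$ shunt admittance $y_i=g_i-\mathbf{i}b_i$. The voltage $V_0$ at node 0 is given and taken as angle reference: $V_0=|V_0|$ real and positive; $v_0:=|V_0|^2$. $\mathbb X(s)$ (for $s=(s_1,\dots,s_n)\in\mathbb C^n$) is the set of $x=(S,I,V,s_0)$ with $S,I\in\mathbb C^E$, $V=(V_1,\dots,V_n)$, $s_0\in\mathbb C$ satisfying $V_i-V_j=z_{ij}I_{ij}$, $S_{ij}=V_iI_{ij}^*$ for $(i,j)\in E$, and $\sum_{k:(j,k)\in E}S_{jk}-\sum_{i:(i,j)\in E}(S_{ij}-z_{ij}|I_{ij}|^2)+y_j^*|V_j|^2=s_j$ for $j\in N$. $\hat{\mathbb Y}(s)$ is the set of real $\hat y=(P,Q,\ell,v,p_0,q_0)$ ($P,Q,\ell$ indexed by $E$, $v=(v_1,\dots,v_n)$), with $S_{ij}:=P_{ij}+\mathbf{i}Q_{ij}$ and $s_j=p_j+\mathbf{i}q_j$, satisfying $p_j=\sum_{k:(j,k)\in E}P_{jk}-\sum_{i:(i,j)\in E}(P_{ij}-r_{ij}\ell_{ij})+g_jv_j$, $q_j=\sum_{k:(j,k)\in E}Q_{jk}-\sum_{i:(i,j)\in E}(Q_{ij}-x_{ij}\ell_{ij})+b_jv_j$ for $j\in N$, and $v_j=v_i-2(r_{ij}P_{ij}+x_{ij}Q_{ij})+(r_{ij}^2+x_{ij}^2)\ell_{ij}$,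 $\ell_{ij}=(P_{ij}^2+Q_{ij}^2)/v_i$ for $(i,j)\in E$. $B$ is the $m\times n$ reduced incidence matrix: $B_{ei}=1$ if link $e$ leaves node $i$, $-1$ if it enters $i$, $0$ otherwise ($e\in E$, $i=1,\dots,n$). $\beta=\beta(\hat y)\in(-\pi,\pi]^m$ with $\beta_{ij}=\angle(v_i-z_{ij}^*S_{ij})$. For $\theta\in(-\pi,\pi]^n$ (and $\theta_0:=0$), $h_\theta(\hat y)=(S,I,V,s_0)$ with $S_{ij}=P_{ij}+\mathbf{i}Q_{ij}$, $I_{ij}=\sqrt{\ell_{ij}}e^{\mathbf{i}(\theta_i-\angle S_{ij})}$, $V_i=\sqrt{v_i}e^{\mathbf{i}\theta_i}$, $s_0=p_0+\mathbf{i}q_0$. *)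

From Stdlib Require Import Reals ZArith List.
From Coquelicot Require Import Coquelicot.
Import ListNotations.
Set Implicit Arguments.

Notation Cx := Complex.C.
Local Open Scope R_scope.

Definition cis (t : R) : Cx := (cos t, sin t).

(* Principal argument in (-pi, pi]; convention: arg 0 = 0. *)
Definition Carg (z : Cx) : R :=
  if Req_EM_T (Cmod z) 0 then 0
  else if Rle_lt_dec 0 (Im z) then acos (Re z / Cmod z)
       else - acos (Re z / Cmod z).

(* Graph data: nodes 0..n, links indexed by e = 0..m-1, link e goes from
   node [tl e] to node [hd e]. *)

Definition is_digraph (n m : nat) (tl hd : nat -> nat) : Prop :=
  (forall e, (e < m)%nat -> (tl e <= n)%nat /\ (hd e <= n)%nat /\ tl e <> hd e) /\
  (forall e e', (e < m)%nat -> (e' < m)%nat -> tl e = tl e' -> hd e = hd e' -> e = e').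

Inductive ureach (m : nat) (tl hd : nat -> nat) : nat -> Prop :=
| ureach0 : ureach m tl hd 0
| ureach_fw : forall e, (e < m)%nat -> ureach m tl hd (tl e) -> ureach m tl hd (hd e)
| ureach_bw : forall e, (e < m)%nat -> ureach m tl hd (hd e) -> ureach m tl hd (tl e).

Definition uconnected (n m : nat) (tl hd : nat -> nat) : Prop :=
  forall i, (i <= n)%nat -> ureach m tl hd i.

Definition sumR (l : list nat) (f : nat -> R) : R := fold_right (fun e a => f e + a) 0 l.
Definition sumC (l : list nat) (f : nat -> Cx) : Cx :=
  fold_right (fun e a => Cplus (f e) a) (RtoC 0) l.
Definition sumZ (l : list nat) (f : nat -> Z) : Z :=
  fold_right (fun e a => (f e + a)%Z) 0%Z l.
Definition links (m : nat) : list nat := seq 0 m.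
Definition nodes1 (n : nat) : list nat := seq 1 n.

(* Reduced incidence matrix B (m x n, columns i = 1..n) *)
Definition Binc (tl hd : nat -> nat) (e i : nat) : Z :=
  if Nat.eqb (tl e) i then 1%Z else if Nat.eqb (hd e) i then (-1)%Z else 0%Z.

Definition BmulR (n : nat) (tl hd : nat -> nat) (th : nat -> R) (e : nat) : R :=
  sumR (nodes1 n) (fun i => IZR (Binc tl hd e i) * th i).
Definition BmulZ (n : nat) (tl hd : nat -> nat) (a : nat -> Z) (e : nat) : Z :=
  sumZ (nodes1 n) (fun i => (Binc tl hd e i * a i)%Z).

Definition ext0 {T} (x0 : T) (x : nat -> T) (j : nat) : T :=
  if Nat.eqb j 0 then x0 else x j.

(* link impedance z_e = r_e + i x_e, node shunt admittance y_j = g_j - i b_j *)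
Definition zimp (r x : nat -> R) (e : nat) : Cx := (r e, x e).
Definition yadm (g b : nat -> R) (j : nat) : Cx := (g j, - b j).
Definition sq (z : Cx) : R := Cmod z ^ 2.

(* x = (S, I, V, s0) in X(s); V indexed by 1..n, V_0 = |V_0| = V0 *)
Definition inX (n m : nat) (tl hd : nat -> nat) (r x g b : nat -> R) (V0 : R)
  (s : nat -> Cx) (S I V : nat -> Cx) (s0 : Cx) : Prop :=
  let Vf := ext0 (RtoC V0) V in
  let z := zimp r x in
  (forall e, (e < m)%nat -> Cminus (Vf (tl e)) (Vf (hd e)) = Cmult (z e) (I e)) /\
  (forall e, (e < m)%nat -> S e = Cmult (Vf (tl e)) (Cconj (I e))) /\
  (forall j, (j <= n)%nat ->
     Cplus (Cminus (sumC (links m) (fun e => if Nat.eqb (tl e) j then S e else RtoC 0))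
                   (sumC (links m) (fun e => if Nat.eqb (hd e) j
                                     then Cminus (S e) (Cmult (z e) (RtoC (sq (I e))))
                                     else RtoC 0)))
           (Cmult (Cconj (yadm g b j)) (RtoC (sq (Vf j))))
     = ext0 s0 s j).

(* yhat = (P, Q, l, v, p0, q0) in Yhat(s); v indexed by 1..n, v_0 = V0^2 *)
Definition inYhat (n m : nat) (tl hd : nat -> nat) (r x g b : nat -> R) (V0 : R)
  (s : nat -> Cx) (P Q l v : nat -> R) (p0 q0 : R) : Prop :=
  let vf := ext0 (V0 ^ 2) v in
  (forall j, (j <= n)%nat ->
     ext0 p0 (fun j => Re (s j)) j =
       sumR (links m) (fun e => if Nat.eqb (tl e) j then P e else 0)
     - sumR (links m) (fun e => if Nat.eqb (hd e) j then P e - r e * l e else 0)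
     + g j * vf j) /\
  (forall j, (j <= n)%nat ->
     ext0 q0 (fun j => Im (s j)) j =
       sumR (links m) (fun e => if Nat.eqb (tl e) j then Q e else 0)
     - sumR (links m) (fun e => if Nat.eqb (hd e) j then Q e - x e * l e else 0)
     + b j * vf j) /\
  (forall e, (e < m)%nat ->
     vf (hd e) = vf (tl e) - 2 * (r e * P e + x e * Q e) + (r e ^ 2 + x e ^ 2) * l e) /\
  (forall e, (e < m)%nat -> l e = (P e ^ 2 + Q e ^ 2) / vf (tl e)).

Definition beta (tl : nat -> nat) (r x : nat -> R) (V0 : R) (P Q v : nat -> R) (e : nat) : R :=
  let vf := ext0 (V0 ^ 2) v in
  Carg (Cminus (RtoC (vf (tl e))) (Cmult (Cconj (zimp r x e)) (P e, Q e))).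

(* h_theta(yhat) = (S, I, V, s0), theta_0 := 0 *)
Definition hS (P Q : nat -> R) (e : nat) : Cx := (P e, Q e).
Definition hI (tl : nat -> nat) (th : nat -> R) (P Q l : nat -> R) (e : nat) : Cx :=
  Cmult (RtoC (sqrt (l e))) (cis (ext0 0 th (tl e) - Carg (hS P Q e))).
Definition hV (th v : nat -> R) (i : nat) : Cx := Cmult (RtoC (sqrt (v i))) (cis (th i)).
Definition hs0 (p0 q0 : R) : Cx := (p0, q0).

Definition solves (n m : nat) (tl hd : nat -> nat) (bet : nat -> R)
  (th : nat -> R) (k : nat -> Z) : Prop :=
  forall e, (e < m)%nat -> BmulR n tl hd th e = bet e + 2 * PI * IZR (k e).

Definition in_box (n : nat) (th : nat -> R) : Prop :=
  forall i, (1 <= i <= n)%nat -> - PI < th i <= PI.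

(* Writing V_i = sqrt(v_i) e^{i theta_i}, the relation S = V I^* holds for h_theta by
   construction, and |I_ij|^2 = l_ij, |V_i|^2 = v_i turn the power balance of Yhat(s) into that
   of X(s).  What remains is Ohm's law V_i - V_j = z_ij I_ij.  Since sqrt(v_i) I_ij is
   conj(S_ij) e^{i theta_i},
     sqrt(v_i) (V_i - z_ij I_ij) = conj(v_i - z_ij^* S_ij) e^{i theta_i}
                                 = |v_i - z_ij^* S_ij| e^{i (theta_i - beta_ij)},
   and the voltage drop equation of Yhat(s) says |v_i - z_ij^* S_ij| = sqrt(v_i v_j).  So Ohm's
   law holds iff e^{i (theta_i - beta_ij)} = e^{i theta_j}, i.e. iff
   (B theta)_ij = beta_ij + 2 pi k_ij.
   For (2), reducing each theta_i modulo 2 pi keeps a solution a solution, and the difference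
   of two solutions changes by a multiple of 2 pi along every link; since theta_0 = 0 and the
   graph is connected, it is a multiple of 2 pi at every node. *)
From Stdlib Require Import Reals ZArith Lra Lia Psatz List.
From Coquelicot Require Import Coquelicot.
Local Open Scope R_scope.

Lemma Carg_polar (z : Cx) :
  fst z = Cmod z * cos (Carg z) /\ snd z = Cmod z * sin (Carg z).
Proof.
  destruct z as [a c]. unfold Carg, Re, Im; cbn [fst snd].
  assert (HM2 : Cmod (a, c) * Cmod (a, c) = a ^ 2 + c ^ 2)
    by (unfold Cmod; cbn [fst snd]; apply sqrt_sqrt; nra).
  pose proof (Cmod_ge_0 (a, c)) as HM0.
  set (M := Cmod (a, c)) in *.
  destruct (Req_EM_T M 0) as [H0|H0].
  { rewrite H0 in HM2 |- *. split; nra. }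
  assert (Hb : -1 <= a / M <= 1).
  { split; apply (Rmult_le_reg_r M); try lra; field_simplify; try lra; nra. }
  assert (Hsin : sqrt (1 - (a / M)²) = Rabs c / M).
  { replace (1 - (a / M)²) with ((c / M)²).
    - rewrite sqrt_Rsqr_abs, Rabs_div by lra. rewrite (Rabs_right M); lra.
    - unfold Rsqr. apply (Rmult_eq_reg_r (M * M)); [|nra].
      field_simplify; lra. }
  destruct (Rle_lt_dec 0 c).
  - rewrite cos_acos, sin_acos, Hsin, Rabs_right by (auto; lra). split; field; lra.
  - rewrite cos_neg, sin_neg, cos_acos, sin_acos, Hsin, Rabs_left by (auto; lra).
    split; field; lra.
Qed.

Lemma cos_sin_eq_iff (a b : R) :
  (cos a = cos b /\ sin a = sin b) <-> exists k : Z, a = b + 2 * PI * IZR k.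
Proof.
  split.
  - intros [Hc Hs].
    assert (Ht : cos (2 * ((a - b) / 2)) = 1).
    { replace (2 * ((a - b) / 2)) with (a - b) by field.
      rewrite cos_minus, Hc, Hs. pose proof (sin2_cos2 b). unfold Rsqr in *. lra. }
    rewrite cos_2a_sin in Ht.
    destruct (sin_eq_0_0 ((a - b) / 2)) as [k Hk]; [nra|].
    exists k. lra.
  - intros [k ->].
    assert (H0 : sin (IZR k * PI) = 0) by (apply sin_eq_0_1; eauto).
    replace (2 * PI * IZR k) with (2 * (IZR k * PI)) by ring.
    rewrite cos_plus, sin_plus, cos_2a_sin, sin_2a, H0. split; ring.
Qed.

Lemma RtoC_mult_inj (a : R) (u u' : Cx) :
  a <> 0 -> Cmult (RtoC a) u = Cmult (RtoC a) u' <-> u = u'.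
Proof.
  intros Ha. split; intros H; [|now rewrite H].
  apply (f_equal (Cmult (RtoC (/ a)))) in H.
  rewrite !Cmult_assoc, <- RtoC_mult, Rinv_l, !Cmult_1_l in H by exact Ha. exact H.
Qed.

Lemma sq_components (z : Cx) : sq z = fst z ^ 2 + snd z ^ 2.
Proof. unfold sq, Cmod. rewrite pow2_sqrt; [reflexivity|nra]. Qed.

Lemma sq_scale_cis (a t : R) : 0 <= a -> sq (Cmult (RtoC (sqrt a)) (cis t)) = a.
Proof.
  intros Ha. rewrite sq_components. unfold cis, Cmult, RtoC; cbn [fst snd].
  pose proof (sin2_cos2 t) as Hcs. pose proof (sqrt_sqrt a Ha). unfold Rsqr in *. nra.
Qed.

Lemma exists_shift_into_box (t : R) : exists z : Z, - PI < t - 2 * PI * IZR z <= PI.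
Proof.
  pose proof PI_RGT_0.
  set (w := (PI - t) / (2 * PI)).
  destruct (archimed w) as [H1 H2].
  exists (1 - up w)%Z. rewrite minus_IZR.
  assert (Hw : 2 * PI * w = PI - t) by (unfold w; field; lra).
  split; nra.
Qed.

Lemma bounded_choice {A : Type} (d : A) (P : nat -> A -> Prop) (m : nat) :
  (forall e, (e < m)%nat -> exists a, P e a) ->
  exists f : nat -> A, forall e, (e < m)%nat -> P e (f e).
Proof.
  induction m as [|m IH]; intros H.
  - exists (fun _ => d). intros; lia.
  - destruct IH as [f Hf]; [intros; apply H; lia|].
    destruct (H m ltac:(lia)) as [a Ha].
    exists (fun e => if Nat.eqb e m then a else f e). intros e He.
    destruct (Nat.eqb_spec e m) as [->|]; [exact Ha|]. apply Hf; lia.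
Qed.

Lemma ext0_map {T U} (f : T -> U) (x0 : T) (x : nat -> T) (j : nat) :
  f (ext0 x0 x j) = ext0 (f x0) (fun i => f (x i)) j.
Proof. unfold ext0. destruct (Nat.eqb j 0); reflexivity. Qed.

Lemma sumR_ext_in (l : list nat) (f g : nat -> R) :
  (forall e, In e l -> f e = g e) -> sumR l f = sumR l g.
Proof.
  induction l as [|a l IH]; intros H; simpl; [reflexivity|].
  rewrite H, IH; auto with datatypes.
Qed.

Lemma sumR_minus (l : list nat) (f g : nat -> R) :
  sumR l (fun e => f e - g e) = sumR l f - sumR l g.
Proof. induction l as [|a l IH]; simpl; [ring|]. rewrite IH; ring. Qed.

Lemma sumR_seq_indicator (f : nat -> R) (c a k : nat) :
  sumR (seq a k) (fun i => if Nat.eqb c i then f i else 0)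
  = if andb (Nat.leb a c) (Nat.ltb c (a + k)) then f c else 0.
Proof.
  revert a. induction k as [|k IH]; intros a; simpl.
  - destruct (Nat.leb_spec a c), (Nat.ltb_spec c (a + 0)); simpl; auto; lia.
  - rewrite IH. replace (S a + k)%nat with (a + S k)%nat by lia.
    destruct (Nat.eqb_spec c a) as [->|Hne].
    + destruct (Nat.leb_spec (S a) a); [lia|].
      rewrite Nat.leb_refl. destruct (Nat.ltb_spec a (a + S k)); simpl; [ring|lia].
    + destruct (Nat.leb_spec (S a) c), (Nat.leb_spec a c); simpl; try ring; lia.
Qed.

Lemma IZR_sumZ (l : list nat) (f : nat -> Z) :
  IZR (sumZ l f) = sumR l (fun i => IZR (f i)).
Proof. induction l as [|a l IH]; simpl; [reflexivity|]. rewrite plus_IZR, IH; reflexivity. Qed.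

Lemma fst_sumC (l : list nat) (f : nat -> Cx) : fst (sumC l f) = sumR l (fun e => fst (f e)).
Proof. induction l as [|a l IH]; simpl; [reflexivity|]. rewrite IH; reflexivity. Qed.

Lemma snd_sumC (l : list nat) (f : nat -> Cx) : snd (sumC l f) = sumR l (fun e => snd (f e)).
Proof. induction l as [|a l IH]; simpl; [reflexivity|]. rewrite IH; reflexivity. Qed.

Lemma IZR_BmulZ (n : nat) (tl hd : nat -> nat) (al : nat -> Z) (e : nat) :
  IZR (BmulZ n tl hd al e) = BmulR n tl hd (fun i => IZR (al i)) e.
Proof. unfold BmulZ, BmulR. rewrite IZR_sumZ. apply sumR_ext_in. intros; apply mult_IZR. Qed.

Section Incidence.

Variables (n m : nat) (tl hd : nat -> nat).
Hypothesis links_proper :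
  forall e, (e < m)%nat -> (tl e <= n)%nat /\ (hd e <= n)%nat /\ tl e <> hd e.

Lemma BmulR_link (th : nat -> R) (e : nat) : (e < m)%nat ->
  BmulR n tl hd th e = ext0 0 th (tl e) - ext0 0 th (hd e).
Proof.
  intros He. destruct (links_proper _ He) as [Ht [Hh Hne]].
  unfold BmulR, nodes1.
  rewrite (sumR_ext_in _ _ (fun i => (if Nat.eqb (tl e) i then th i else 0)
                                    - (if Nat.eqb (hd e) i then th i else 0))).
  - rewrite sumR_minus, !sumR_seq_indicator. unfold ext0.
    destruct (Nat.eqb_spec (tl e) 0), (Nat.eqb_spec (hd e) 0);
      destruct (Nat.leb_spec 1 (tl e)), (Nat.ltb_spec (tl e) (1 + n)),
               (Nat.leb_spec 1 (hd e)), (Nat.ltb_spec (hd e) (1 + n));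
      simpl; try ring; lia.
  - intros i _. unfold Binc.
    destruct (Nat.eqb_spec (tl e) i), (Nat.eqb_spec (hd e) i); try ring; congruence.
Qed.

Variable bet : nat -> R.

Lemma solves_shift (th th' : nat -> R) (k k' al : nat -> Z) :
  solves n m tl hd bet th k ->
  (forall i, (1 <= i <= n)%nat -> th' i = th i + 2 * PI * IZR (al i)) ->
  (forall e, (e < m)%nat -> k' e = (k e + BmulZ n tl hd al e)%Z) ->
  solves n m tl hd bet th' k'.
Proof.
  intros Hs Hth Hk e He. destruct (links_proper _ He) as [Ht [Hh _]].
  assert (Hext : forall j, (j <= n)%nat ->
     ext0 0 th' j = ext0 0 th j + 2 * PI * ext0 0 (fun i => IZR (al i)) j).
  { intros [|j] Hj; unfold ext0; simpl; [ring|]. apply Hth; lia. }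
  specialize (Hs e He).
  rewrite BmulR_link in Hs |- * by exact He.
  rewrite Hk, plus_IZR, IZR_BmulZ, BmulR_link, !Hext by auto.
  lra.
Qed.

Lemma solves_exists_in_box (th : nat -> R) (k : nat -> Z) :
  solves n m tl hd bet th k ->
  exists th' k', in_box n th' /\ solves n m tl hd bet th' k'.
Proof.
  intros Hs.
  destruct (bounded_choice 0%Z (fun i z => - PI < th i - 2 * PI * IZR z <= PI) (S n))
    as [al Hal]; [intros; apply exists_shift_into_box|].
  set (th' := fun i => th i + 2 * PI * IZR (- al i)).
  assert (Hth' : forall i, (1 <= i <= n)%nat -> th' i = th i + 2 * PI * IZR (- al i))
    by reflexivity.
  exists th', (fun e => (k e + BmulZ n tl hd (fun i => (- al i)%Z) e)%Z).
  split.
  - intros i Hi. specialize (Hal i ltac:(lia)). unfold th'. rewrite opp_IZR. lra.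
  - eapply solves_shift; [exact Hs|exact Hth'|reflexivity].
Qed.

Lemma solves_diff_reach (th th' : nat -> R) (k k' : nat -> Z) (j : nat) :
  solves n m tl hd bet th k -> solves n m tl hd bet th' k' -> ureach m tl hd j ->
  exists z : Z, ext0 0 th' j - ext0 0 th j = 2 * PI * IZR z.
Proof.
  intros Hs Hs'.
  induction 1 as [|e He _ [z Hz]|e He _ [z Hz]].
  - exists 0%Z. unfold ext0; simpl. ring.
  - pose proof (Hs e He) as A; pose proof (Hs' e He) as A'.
    rewrite BmulR_link in A, A' by exact He.
    exists (z - (k' e - k e))%Z. rewrite !minus_IZR. lra.
  - pose proof (Hs e He) as A; pose proof (Hs' e He) as A'.
    rewrite BmulR_link in A, A' by exact He.
    exists (z + (k' e - k e))%Z. rewrite plus_IZR, minus_IZR. lra.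
Qed.

Lemma solves_unique_up_to_shift (th th' : nat -> R) (k k' : nat -> Z) :
  uconnected n m tl hd ->
  solves n m tl hd bet th k -> solves n m tl hd bet th' k' ->
  exists al : nat -> Z,
    (forall i, (1 <= i <= n)%nat -> th' i = th i + 2 * PI * IZR (al i)) /\
    (forall e, (e < m)%nat -> k' e = (k e + BmulZ n tl hd al e)%Z).
Proof.
  intros Hcon Hs Hs'.
  destruct (bounded_choice 0%Z (fun i z => ext0 0 th' i - ext0 0 th i = 2 * PI * IZR z) (S n))
    as [al Hal].
  { intros i Hi. eapply solves_diff_reach; [exact Hs|exact Hs'|apply Hcon; lia]. }
  assert (Hext : forall j, (j <= n)%nat ->
            ext0 0 th' j - ext0 0 th j = 2 * PI * ext0 0 (fun i => IZR (al i)) j).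
  { intros j Hj. specialize (Hal j ltac:(lia)). unfold ext0 in *.
    destruct (Nat.eqb j 0); [ring|exact Hal]. }
  exists al. split.
  - intros [|i] Hi; [lia|]. specialize (Hal (S i) ltac:(lia)). unfold ext0 in Hal. simpl in Hal.
    lra.
  - intros e He. destruct (links_proper _ He) as [Ht [Hh _]].
    pose proof (Hs e He) as A; pose proof (Hs' e He) as A'.
    rewrite BmulR_link in A, A' by exact He.
    apply eq_IZR. rewrite plus_IZR, IZR_BmulZ, BmulR_link by exact He.
    pose proof PI_RGT_0.
    apply (Rmult_eq_reg_l (2 * PI)); [|lra].
    rewrite Rmult_plus_distr_l, Rmult_minus_distr_l, <- !Hext by auto. lra.
Qed.

End Incidence.

Section HatMap.

Variables (tl hd : nat -> nat) (r x : nat -> R) (V0 : R) (th P Q l v : nat -> R).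
Hypothesis V0_pos : 0 < V0.

Lemma hV_ext0 (j : nat) :
  ext0 (RtoC V0) (hV th v) j = Cmult (RtoC (sqrt (ext0 (V0 ^ 2) v j))) (cis (ext0 0 th j)).
Proof.
  unfold ext0, hV. destruct (Nat.eqb j 0); [|reflexivity].
  rewrite sqrt_pow2 by lra. unfold cis. rewrite cos_0, sin_0.
  apply injective_projections; simpl; ring.
Qed.

Lemma sq_hV_ext0 (j : nat) : 0 <= ext0 (V0 ^ 2) v j ->
  sq (ext0 (RtoC V0) (hV th v) j) = ext0 (V0 ^ 2) v j.
Proof. intros H. rewrite hV_ext0. apply sq_scale_cis, H. Qed.

Lemma hI_components (e : nat) (A : R) :
  0 < A -> l e = (P e ^ 2 + Q e ^ 2) / A ->
  fst (hI tl th P Q l e)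
    = (cos (ext0 0 th (tl e)) * P e + sin (ext0 0 th (tl e)) * Q e) / sqrt A /\
  snd (hI tl th P Q l e)
    = (sin (ext0 0 th (tl e)) * P e - cos (ext0 0 th (tl e)) * Q e) / sqrt A.
Proof.
  intros HA Hl. unfold hI, hS.
  destruct (Carg_polar (P e, Q e)) as [H1 H2]; cbn [fst snd] in H1, H2.
  assert (HM : sqrt (l e) = Cmod (P e, Q e) / sqrt A).
  { rewrite Hl, sqrt_div by (nra || lra). reflexivity. }
  pose proof (sqrt_lt_R0 A HA).
  set (phi := Carg (P e, Q e)) in *. set (M := Cmod (P e, Q e)) in *.
  unfold cis, Cmult, RtoC; cbn [fst snd].
  rewrite HM, cos_minus, sin_minus, H1, H2.
  split; field; lra.
Qed.

Lemma sq_hI (e : nat) (A : R) :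
  0 < A -> l e = (P e ^ 2 + Q e ^ 2) / A -> sq (hI tl th P Q l e) = l e.
Proof.
  intros HA Hl. destruct (hI_components e A HA Hl) as [I1 I2].
  rewrite sq_components, I1, I2, Hl.
  pose proof (sqrt_lt_R0 A HA). pose proof (sqrt_sqrt A (Rlt_le _ _ HA)) as HA2.
  pose proof (sin2_cos2 (ext0 0 th (tl e))) as Hcs. unfold Rsqr in Hcs.
  set (c := cos _) in *. set (s := sin _) in *.
  transitivity ((P e ^ 2 + Q e ^ 2) * (s * s + c * c) / (sqrt A * sqrt A)); [field; lra|].
  rewrite Hcs, HA2. field. lra.
Qed.

Lemma hS_eq_hV_conj_hI (e : nat) :
  0 < ext0 (V0 ^ 2) v (tl e) -> l e = (P e ^ 2 + Q e ^ 2) / ext0 (V0 ^ 2) v (tl e) ->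
  hS P Q e = Cmult (ext0 (RtoC V0) (hV th v) (tl e)) (Cconj (hI tl th P Q l e)).
Proof.
  intros HA Hl. rewrite hV_ext0.
  destruct (hI_components e _ HA Hl) as [I1 I2].
  pose proof (sqrt_lt_R0 _ HA).
  pose proof (sin2_cos2 (ext0 0 th (tl e))) as Hcs. unfold Rsqr in Hcs.
  set (c := cos _) in *. set (s := sin _) in *.
  apply injective_projections; unfold hS, Cconj, Cmult, RtoC, cis; cbn [fst snd];
    fold c s; rewrite I1, I2.
  - transitivity (P e * (s * s + c * c)); [rewrite Hcs; ring|]. field. lra.
  - transitivity (Q e * (s * s + c * c)); [rewrite Hcs; ring|]. field. lra.
Qed.

Lemma hV_sub_drop_polar (e : nat) :
  let A := ext0 (V0 ^ 2) v (tl e) in let B := ext0 (V0 ^ 2) v (hd e) in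
  0 < A -> 0 < B -> l e = (P e ^ 2 + Q e ^ 2) / A ->
  B = A - 2 * (r e * P e + x e * Q e) + (r e ^ 2 + x e ^ 2) * l e ->
  Cmult (RtoC (sqrt A))
        (Cminus (ext0 (RtoC V0) (hV th v) (tl e)) (Cmult (zimp r x e) (hI tl th P Q l e)))
  = Cmult (RtoC (sqrt A * sqrt B)) (cis (ext0 0 th (tl e) - beta tl r x V0 P Q v e)).
Proof.
  intros A B HA HB Hl Hdrop. rewrite hV_ext0.
  destruct (hI_components e _ HA Hl) as [I1 I2].
  unfold beta. fold A.
  set (w := Cminus (RtoC A) (Cmult (Cconj (zimp r x e)) (P e, Q e))).
  destruct (Carg_polar w) as [W1 W2].
  assert (Wfst : fst w = A - (r e * P e + x e * Q e)) by (unfold w, zimp; simpl; ring).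
  assert (Wsnd : snd w = x e * P e - r e * Q e) by (unfold w, zimp; simpl; ring).
  assert (HW : Cmod w = sqrt A * sqrt B).
  { unfold Cmod. rewrite Wfst, Wsnd, <- sqrt_mult by lra. f_equal.
    rewrite Hdrop, Hl. field. lra. }
  pose proof (sqrt_lt_R0 _ HA). pose proof (sqrt_sqrt A (Rlt_le _ _ HA)) as HA2.
  set (ti := ext0 0 th (tl e)) in *. set (bt := Carg w) in *. set (a := sqrt A) in *.
  apply injective_projections; unfold Cminus, Cplus, Copp, Cmult, RtoC, cis, zimp;
    cbn [fst snd]; rewrite I1, I2, <- HW, ?cos_minus, ?sin_minus.
  - transitivity (cos ti * (Cmod w * cos bt) + sin ti * (Cmod w * sin bt)); [|ring].
    rewrite <- W1, <- W2, Wfst, Wsnd, <- HA2. field. lra.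
  - transitivity (sin ti * (Cmod w * cos bt) - cos ti * (Cmod w * sin bt)); [|ring].
    rewrite <- W1, <- W2, Wfst, Wsnd, <- HA2. field. lra.
Qed.

Lemma ohm_hI_iff (e : nat) :
  let A := ext0 (V0 ^ 2) v (tl e) in let B := ext0 (V0 ^ 2) v (hd e) in
  0 < A -> 0 < B -> l e = (P e ^ 2 + Q e ^ 2) / A ->
  B = A - 2 * (r e * P e + x e * Q e) + (r e ^ 2 + x e ^ 2) * l e ->
  Cminus (ext0 (RtoC V0) (hV th v) (tl e)) (ext0 (RtoC V0) (hV th v) (hd e))
    = Cmult (zimp r x e) (hI tl th P Q l e)
  <-> exists k : Z, ext0 0 th (tl e) - ext0 0 th (hd e) = beta tl r x V0 P Q v e + 2 * PI * IZR k.
Proof.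
  intros A B HA HB Hl Hdrop.
  pose proof (sqrt_lt_R0 _ HA). pose proof (sqrt_lt_R0 _ HB).
  pose proof (hV_sub_drop_polar e HA HB Hl Hdrop) as Hrot. fold A B in Hrot.
  transitivity (Cmult (RtoC (sqrt A * sqrt B)) (cis (ext0 0 th (tl e) - beta tl r x V0 P Q v e))
                = Cmult (RtoC (sqrt A * sqrt B)) (cis (ext0 0 th (hd e)))).
  { rewrite <- Hrot.
    assert (HVB : ext0 (RtoC V0) (hV th v) (hd e)
                  = Cmult (RtoC (sqrt B)) (cis (ext0 0 th (hd e)))) by apply hV_ext0.
    rewrite RtoC_mult, <- Cmult_assoc, <- HVB, RtoC_mult_inj by lra.
    split; intros H'; rewrite <- H'; ring. }
  rewrite RtoC_mult_inj by nra.
  transitivity (cos (ext0 0 th (tl e) - beta tl r x V0 P Q v e) = cos (ext0 0 th (hd e)) /\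
                sin (ext0 0 th (tl e) - beta tl r x V0 P Q v e) = sin (ext0 0 th (hd e))).
  { unfold cis. split; [intros H'; injection H'; auto|intros [-> ->]; reflexivity]. }
  rewrite cos_sin_eq_iff. split; intros [k Hk]; exists k; lra.
Qed.

End HatMap.

Lemma power_balance_of_hat (m : nat) (tl hd : nat -> nat) (r x g b : nat -> R)
  (s : nat -> Cx) (P Q l : nat -> R) (p0 q0 : R) (I : nat -> Cx) (Vj : Cx) (vj : R) (j : nat) :
  (forall e, (e < m)%nat -> sq (I e) = l e) -> sq Vj = vj ->
  ext0 p0 (fun j => Re (s j)) j =
    sumR (links m) (fun e => if Nat.eqb (tl e) j then P e else 0)
    - sumR (links m) (fun e => if Nat.eqb (hd e) j then P e - r e * l e else 0) + g j * vj ->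
  ext0 q0 (fun j => Im (s j)) j =
    sumR (links m) (fun e => if Nat.eqb (tl e) j then Q e else 0)
    - sumR (links m) (fun e => if Nat.eqb (hd e) j then Q e - x e * l e else 0) + b j * vj ->
  Cplus (Cminus (sumC (links m) (fun e => if Nat.eqb (tl e) j then hS P Q e else RtoC 0))
                (sumC (links m) (fun e => if Nat.eqb (hd e) j
                                  then Cminus (hS P Q e) (Cmult (zimp r x e) (RtoC (sq (I e))))
                                  else RtoC 0)))
        (Cmult (Cconj (yadm g b j)) (RtoC (sq Vj)))
  = ext0 (hs0 p0 q0) s j.
Proof.
  intros HI HV Hp Hq.
  assert (Hlinks : forall e, In e (links m) -> sq (I e) = l e)
    by (intros e He; apply HI; unfold links in He; apply in_seq in He; lia).
  apply injective_projections.
  - transitivity (ext0 p0 (fun j => Re (s j)) j);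
      [|rewrite (@ext0_map Cx R fst); reflexivity].
    rewrite Hp.
    unfold Cminus, Cplus, Copp, Cmult, Cconj, yadm, RtoC; cbn [fst snd].
    rewrite !fst_sumC, HV. unfold Rminus.
    f_equal; [f_equal; [|f_equal]|ring]; apply sumR_ext_in;
      intros e He; destruct (Nat.eqb _ j); unfold hS, zimp; cbn [fst snd];
      rewrite ?Hlinks by exact He; ring.
  - transitivity (ext0 q0 (fun j => Im (s j)) j);
      [|rewrite (@ext0_map Cx R snd); reflexivity].
    rewrite Hq.
    unfold Cminus, Cplus, Copp, Cmult, Cconj, yadm, RtoC; cbn [fst snd].
    rewrite !snd_sumC, HV. unfold Rminus.
    f_equal; [f_equal; [|f_equal]|ring]; apply sumR_ext_in;
      intros e He; destruct (Nat.eqb _ j); unfold hS, zimp; cbn [fst snd];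
      rewrite ?Hlinks by exact He; ring.
Qed.

Lemma ext0_sq_pos (n : nat) (V0 : R) (v : nat -> R) (j : nat) :
  0 < V0 -> (forall i, (1 <= i <= n)%nat -> 0 < v i) -> (j <= n)%nat ->
  0 < ext0 (V0 ^ 2) v j.
Proof.
  intros HV0 Hv Hj. unfold ext0. destruct (Nat.eqb_spec j 0); [nra|]. apply Hv. lia.
Qed.

Lemma inX_h_iff_ohm (n m : nat) (tl hd : nat -> nat) (r x g b : nat -> R) (V0 : R)
  (s : nat -> Cx) (P Q l v : nat -> R) (p0 q0 : R) (th : nat -> R) :
  (forall e, (e < m)%nat -> (tl e <= n)%nat /\ (hd e <= n)%nat /\ tl e <> hd e) ->
  0 < V0 -> (forall j, (1 <= j <= n)%nat -> 0 < v j) ->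
  inYhat n m tl hd r x g b V0 s P Q l v p0 q0 ->
  inX n m tl hd r x g b V0 s (hS P Q) (hI tl th P Q l) (hV th v) (hs0 p0 q0) <->
  forall e, (e < m)%nat ->
    Cminus (ext0 (RtoC V0) (hV th v) (tl e)) (ext0 (RtoC V0) (hV th v) (hd e))
    = Cmult (zimp r x e) (hI tl th P Q l e).
Proof.
  intros Hlinks HV0 Hv [HYp [HYq [_ HYl]]].
  unfold inX; cbv zeta.
  split; [intros [Hohm _]; exact Hohm|intros Hohm; split; [exact Hohm|split]].
  - intros e He. destruct (Hlinks e He) as [Ht _].
    apply hS_eq_hV_conj_hI; [exact HV0|eapply ext0_sq_pos; eauto|apply HYl, He].
  - intros j Hj.
    apply power_balance_of_hat with (l := l) (vj := ext0 (V0 ^ 2) v j);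
      [| |apply HYp, Hj|apply HYq, Hj].
    + intros e He. destruct (Hlinks e He) as [Ht _].
      apply sq_hI with (A := ext0 (V0 ^ 2) v (tl e));
        [eapply ext0_sq_pos; eauto|apply HYl, He].
    + apply sq_hV_ext0; [exact HV0|apply Rlt_le; eapply ext0_sq_pos; eauto].
Qed.

Lemma inX_h_iff_solves (n m : nat) (tl hd : nat -> nat) (r x g b : nat -> R) (V0 : R)
  (s : nat -> Cx) (P Q l v : nat -> R) (p0 q0 : R) (th : nat -> R) :
  (forall e, (e < m)%nat -> (tl e <= n)%nat /\ (hd e <= n)%nat /\ tl e <> hd e) ->
  0 < V0 -> (forall j, (1 <= j <= n)%nat -> 0 < v j) ->
  inYhat n m tl hd r x g b V0 s P Q l v p0 q0 ->
  inX n m tl hd r x g b V0 s (hS P Q) (hI tl th P Q l) (hV th v) (hs0 p0 q0) <->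
  exists k : nat -> Z, solves n m tl hd (beta tl r x V0 P Q v) th k.
Proof.
  intros Hlinks HV0 Hv HY.
  assert (Hvf : forall j, (j <= n)%nat -> 0 < ext0 (V0 ^ 2) v j)
    by (intros j; apply ext0_sq_pos; assumption).
  rewrite inX_h_iff_ohm by assumption.
  transitivity (forall e, (e < m)%nat ->
                  exists k, BmulR n tl hd th e = beta tl r x V0 P Q v e + 2 * PI * IZR k).
  { destruct HY as [_ [_ [Hdrop Hl]]].
    split; intros H e He; specialize (H e He); destruct (Hlinks e He) as [Ht [Hh _]];
      pose proof (ohm_hI_iff tl hd r x V0 th P Q l v HV0 e (Hvf _ Ht) (Hvf _ Hh)
                    (Hl e He) (Hdrop e He)) as Hiff;
      rewrite <- (BmulR_link _ _ _ _ Hlinks th e He) in Hiff; apply Hiff, H. }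
  split; [apply bounded_choice, 0%Z|intros [k Hk] e He; exists (k e); apply Hk, He].
Qed.

Theorem lemma1 (n m : nat) (tl hd : nat -> nat) (r x g b : nat -> R) (V0 : R)
  (s : nat -> Cx) (P Q l v : nat -> R) (p0 q0 : R) :
  is_digraph n m tl hd -> uconnected n m tl hd -> 0 < V0 ->
  (forall j, (1 <= j <= n)%nat -> 0 < v j) ->
  inYhat n m tl hd r x g b V0 s P Q l v p0 q0 ->
  let bet := beta tl r x V0 P Q v in
  (forall th : nat -> R, in_box n th ->
     (inX n m tl hd r x g b V0 s (hS P Q) (hI tl th P Q l) (hV th v) (hs0 p0 q0)
      <-> exists k : nat -> Z, solves n m tl hd bet th k)) /\
  ((exists (th : nat -> R) (k : nat -> Z), solves n m tl hd bet th k) ->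
   exists (th : nat -> R) (k : nat -> Z),
     in_box n th /\ solves n m tl hd bet th k /\
     forall (th' : nat -> R) (k' : nat -> Z),
       solves n m tl hd bet th' k' <->
       exists al : nat -> Z,
         (forall i, (1 <= i <= n)%nat -> th' i = th i + 2 * PI * IZR (al i)) /\
         (forall e, (e < m)%nat -> k' e = (k e + BmulZ n tl hd al e)%Z)).
Proof.
  intros [Hlinks _] Hcon HV0 Hv HY bet. split.
  - intros th _. apply inX_h_iff_solves; assumption.
  - intros [th0 [k0 Hs0]].
    destruct (solves_exists_in_box _ _ _ _ Hlinks _ _ _ Hs0) as [th [k [Hbox Hs]]].
    exists th, k. split; [exact Hbox|split; [exact Hs|]].
    intros th' k'. split.
    + intros Hs'. exact (solves_unique_up_to_shift _ _ _ _ Hlinks _ _ _ _ _ Hcon Hs Hs').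
    + intros [al [Hth Hk]]. exact (solves_shift _ _ _ _ Hlinks _ _ _ _ _ _ Hs Hth Hk).
Qed.
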